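(* Let $K\ge1$, $\bar P_1,\dots,\bar P_K>0$ and $0<h_1<h_2<\dots<h_K$. Consider maximizing over $\mathbf P\in\mathcal P=\{\mathbf P:0\le P_k\le\bar P_k\ \forall k\}$ the quantity $$f(\mathbf P)=\tfrac12\log\Big(1+\sum_{k=1}^KP_k\Big)-\tfrac12\log\Big(1+\sum_{k=1}^Kh_kP_k\Big).$$ Set $h_0=0$, $\bar P_0=0$, $h_{K+1}=+\infty$, and for $0\le T\le K$ let $\phi_T=\frac{1+\sum_{k=0}^Th_k\bar P_k}{1+\sum_{k=0}^T\bar P_k}$. Then there is a (unique) index $T\in\{0,\dots,K\}$ with $h_T<\phi_T\le h_{T+1}$, and the allocation $P^*_k=\bar P_k$ for $k\le T$, $P^*_k=0$ for $k>T$ maximizes $f$ over $\mathcal P$ (hence also maximizes the secrecy sum-rate $[f(\mathbf P)]^+$ of the superposition region).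
   Context: $\log$ is base 2; $[x]^+=\max\{x,0\}$. The quantity $[f(\mathbf P)]^+$ is the secrecy sum-rate bound $\sum_k R^s_k\le[C^M_{\mathcal K}(\mathbf P)-C^W_{\mathcal K}(\mathbf P)]^+$ of the superposition region of the standardized Gaussian multiple-access wire-tap channel, where user $k$ has (standardized) eavesdropper gain $h_k$ and the intended receiver's gains are all 1. *)

From mathcomp Require Import all_boot all_order all_algebra.
From mathcomp Require Import all_classical all_reals all_analysis.
Set Implicit Arguments. Unset Strict Implicit. Unset Printing Implicit Defensive.
Import Order.TTheory GRing.Theory Num.Theory.
Local Open Scope ring_scope.

Definition log2 {R : realType} (x : R) : R := ln x / ln 2.

(* Users are indexed 1..K; P, Pbar, h : nat -> R, only indices 1..K matter. *)
Definition fobj {R : realType} (K : nat) (h P : nat -> R) : R :=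
  2^-1 * log2 (1 + \sum_(1 <= k < K.+1) P k)
  - 2^-1 * log2 (1 + \sum_(1 <= k < K.+1) h k * P k).

Definition feasible {R : realType} (K : nat) (Pbar P : nat -> R) : Prop :=
  forall k, (1 <= k <= K)%N -> 0 <= P k <= Pbar k.

(* phi_T, with the convention h_0 = 0, Pbar_0 = 0 (the k = 0 term vanishes) *)
Definition phi {R : realType} (h Pbar : nat -> R) (T : nat) : R :=
  (1 + \sum_(1 <= k < T.+1) h k * Pbar k) / (1 + \sum_(1 <= k < T.+1) Pbar k).

Definition hext {R : realType} (h : nat -> R) (k : nat) : R :=
  if k == 0%N then 0 else h k.

(* h_T < phi_T <= h_{T+1}, with h_{K+1} = +oo *)
Definition threshold_index {R : realType} (K : nat) (h Pbar : nat -> R) (T : nat)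
  : Prop :=
  (T <= K)%N /\ hext h T < phi h Pbar T /\ ((T < K)%N -> phi h Pbar T <= h T.+1).

Definition Pstar {R : realType} (Pbar : nat -> R) (T : nat) (k : nat) : R :=
  if (k <= T)%N then Pbar k else 0.

(** Write [N(P) = 1 + sum_k P_k], [D(P) = 1 + sum_k h_k P_k], [psi = phi_T] and
    [Q] for the threshold allocation.  Since [phi_(n+1)] is a mediant of [phi_n]
    and [h_(n+1)], the sequence [phi_n] stays above [h_n] until it first drops to
    at most [h_(n+1)], and after that it stays at most [h_n]; this gives existence
    and uniqueness of [T].  The allocation [Q] has [D(Q) = psi N(Q)], while for
    every feasible [P]
    [D(P) - psi N(P) - (D(Q) - psi N(Q)) = sum_k (h_k - psi) (P_k - Q_k) >= 0],
    each term being a product of two nonpositive (k <= T) or two nonnegative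
    (k > T) factors.  Hence [N(P) / D(P) <= 1 / psi = N(Q) / D(Q)], and
    [f = log2 (N / D) / 2] is maximal at [Q]. *)
From mathcomp Require Import all_boot all_order all_algebra.
From mathcomp Require Import all_classical all_reals all_analysis.
From mathcomp Require Import ring lra.
Import Order.TTheory GRing.Theory Num.Theory.
Local Open Scope ring_scope.

Lemma log2M (R : realType) : {in Num.pos &, {morph @log2 R : x y / x * y >-> x + y}}.
Proof. by move=> x y x0 y0; rewrite /log2 lnM // mulrDl. Qed.

Lemma ler_log2 (R : realType) : {in Num.pos &, {mono @log2 R : x y / x <= y}}.
Proof.
move=> x y x0 y0; rewrite /log2 ler_pM2r ?ler_ln //.
by rewrite invr_gt0 ln_gt0 // ltr1n.
Qed.

Lemma log2_ratio_le (R : realType) (a b c d : R) :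
  0 < a -> 0 < b -> 0 < c -> 0 < d -> a * d <= c * b ->
  log2 a - log2 b <= log2 c - log2 d.
Proof.
move=> a0 b0 c0 d0; rewrite -ler_log2 ?posrE ?mulr_gt0 // !log2M ?posrE //.
by rewrite lerBlDr addrAC lerBrDr.
Qed.

Lemma ltr_mediant (R : realFieldType) (A B p c : R) : 0 < B -> 0 < p ->
  c < A / B -> c < (A + c * p) / (B + p).
Proof. by move=> B0 p0; rewrite !ltr_pdivlMr ?addr_gt0 // => ?; nra. Qed.

Lemma ler_mediant (R : realFieldType) (A B p c : R) : 0 < B -> 0 < p ->
  A / B <= c -> (A + c * p) / (B + p) <= c.
Proof. by move=> B0 p0; rewrite !ler_pdivrMr ?addr_gt0 // => ?; nra. Qed.

Lemma phi0 (R : realType) (h Pbar : nat -> R) : phi h Pbar 0 = 1.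
Proof. by rewrite /phi !big_geq // addr0 divr1. Qed.

Lemma phiS (R : realType) (h Pbar : nat -> R) n :
  phi h Pbar n.+1 =
  ((1 + \sum_(1 <= k < n.+1) h k * Pbar k) + h n.+1 * Pbar n.+1) /
  ((1 + \sum_(1 <= k < n.+1) Pbar k) + Pbar n.+1).
Proof. by rewrite /phi !(big_nat_recr n.+1) // !addrA. Qed.

Lemma sum_Pstar (R : realType) (K T : nat) (Pbar : nat -> R) (F : nat -> R -> R) :
  (forall k, F k 0 = 0) -> (T <= K)%N ->
  \sum_(1 <= k < K.+1) F k (Pstar Pbar T k) = \sum_(1 <= k < T.+1) F k (Pbar k).
Proof.
move=> F0 TK; rewrite (big_cat_nat _ (n := T.+1)) //=.
have -> : \sum_(T.+1 <= k < K.+1) F k (Pstar Pbar T k) = 0.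
  by rewrite big_nat_cond big1 // => k /andP[/andP[Tk _] _]; rewrite /Pstar leqNgt Tk.
rewrite addr0.
by apply: eq_big_nat => k /andP[_ kT]; rewrite /Pstar -ltnS kT.
Qed.

Section ThresholdAllocation.

Variables (R : realType) (K : nat) (Pbar h : nat -> R).
Hypothesis Pbar_gt0 : forall k, (1 <= k <= K)%N -> 0 < Pbar k.
Hypothesis h1_gt0 : 0 < h 1%N.
Hypothesis h_incr : forall k, (1 <= k < K)%N -> h k < h k.+1.

Lemma h_homo i j : (1 <= i)%N -> (i <= j <= K)%N -> h i <= h j.
Proof.
move=> i1 /andP[ij jK].
apply: (homo_leq_in (D := [pred k | 1 <= k <= K]%N) (r := <=%R)); rewrite ?inE.
- exact: lexx.
- by move=> ? ? ?; apply: le_trans.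
- move=> a b /andP[a1 _] /andP[_ bK] c /andP[ac cb].
  by rewrite inE (leq_trans a1 (ltnW ac)) (leq_trans (ltnW cb) bK).
- by move=> k /andP[k1 _] /andP[_ kK]; apply/ltW/h_incr; rewrite k1.
- by rewrite i1 (leq_trans ij jK).
- by rewrite (leq_trans i1 ij).
- exact: ij.
Qed.

Lemma h_ge0 k : (1 <= k <= K)%N -> 0 <= h k.
Proof. by move=> /andP[k1 kK]; apply/ltW/(lt_le_trans h1_gt0)/h_homo; rewrite // k1. Qed.

Lemma phi_denom_gt0 n : (n <= K)%N -> 0 < 1 + \sum_(1 <= k < n.+1) Pbar k.
Proof.
move=> nK; apply: (lt_le_trans ltr01); rewrite lerDl big_nat_cond; apply: sumr_ge0.
move=> k /andP[/andP[k1 kn] _]; apply/ltW/Pbar_gt0.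
by rewrite k1 (leq_trans _ nK) // -ltnS.
Qed.

Lemma threshold_or_hext_lt_phi n : (n <= K)%N ->
  (exists T, threshold_index K h Pbar T) \/ hext h n < phi h Pbar n.
Proof.
elim: n => [_|n IH nK]; first by right; rewrite phi0 /hext ltr01.
case: (IH (ltnW nK)) => [|hn_lt]; first by left.
have [phi_le|h_lt] := leP (phi h Pbar n) (h n.+1).
  by left; exists n; split; [exact: ltnW | split].
right; rewrite /hext /= phiS; apply: ltr_mediant => //.
  exact/phi_denom_gt0/ltnW.
by apply: Pbar_gt0; rewrite nK.
Qed.

Lemma threshold_index_exists : exists T, threshold_index K h Pbar T.
Proof.
case: (@threshold_or_hext_lt_phi K (leqnn K)) => // hK_lt.
by exists K; split=> //; split=> //; rewrite ltnn.
Qed.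

Lemma phi_le_h_after {T m} : threshold_index K h Pbar T ->
  (T < m <= K)%N -> phi h Pbar m <= h m.
Proof.
case=> [TK [_ phiT_le]]; elim: m => // m IH /andP[Tm mK].
rewrite phiS; apply: ler_mediant.
- exact/phi_denom_gt0/ltnW.
- by apply: Pbar_gt0; rewrite mK.
suff : phi h Pbar m <= h m.+1 by [].
move: Tm; rewrite ltnS leq_eqVlt => /orP[/eqP Tm_eq|Tm']; first by subst m; apply: phiT_le.
apply: le_trans (IH _) _; first by rewrite Tm' ltnW.
by apply: h_homo; rewrite ?(leq_ltn_trans _ Tm') // leqnSn.
Qed.

Lemma threshold_index_unique T T' :
  threshold_index K h Pbar T -> threshold_index K h Pbar T' -> T' = T.
Proof.
have no_later A B : threshold_index K h Pbar A -> threshold_index K h Pbar B ->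
    ~ (A < B)%N.
  move=> thA [BK [hB_lt _]] AB.
  move: hB_lt; rewrite /hext ifF; last by rewrite gtn_eqF // (leq_ltn_trans _ AB).
  by rewrite ltNge (phi_le_h_after thA) ?AB.
move=> thT thT'; case: (ltngtP T' T) => // ?; exfalso.
- exact: (no_later T' T).
- exact: (no_later T T').
Qed.

Variables (T : nat).
Hypothesis thT : threshold_index K h Pbar T.

Lemma Pstar_feasible : feasible K Pbar (Pstar Pbar T).
Proof. by move=> k k1K; rewrite /Pstar; case: ifP; rewrite lexx ltW ?Pbar_gt0. Qed.

Lemma phi_threshold_Pstar :
  phi h Pbar T * (1 + \sum_(1 <= k < K.+1) Pstar Pbar T k) =
  1 + \sum_(1 <= k < K.+1) h k * Pstar Pbar T k.
Proof.
case: thT => TK _.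
rewrite (@sum_Pstar _ _ _ _ (fun _ x => x)) // (@sum_Pstar _ _ _ _ (fun k x => h k * x)) //=;
  last by move=> k; rewrite mulr0.
by rewrite /phi divfK // gt_eqF // phi_denom_gt0.
Qed.

Lemma phi_threshold_le P : feasible K Pbar P ->
  phi h Pbar T * (1 + \sum_(1 <= k < K.+1) P k) <= 1 + \sum_(1 <= k < K.+1) h k * P k.
Proof.
case: (thT) => [TK [hT_lt phiT_le]] feasP.
set psi := phi h Pbar T.
have exchange_ge0 : 0 <= \sum_(1 <= k < K.+1) (h k - psi) * (P k - Pstar Pbar T k).
  rewrite big_nat_cond sumr_ge0 // => k /andP[/andP[k1 kK] _].
  have /andP[P_ge0 P_le] : 0 <= P k <= Pbar k by apply: feasP; rewrite k1 -ltnS.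
  rewrite ltnS in kK.
  rewrite /Pstar; case: leqP => kT.
    rewrite mulr_le0 ?subr_le0 // ltW // (le_lt_trans _ hT_lt) // /hext.
    by rewrite ifF ?h_homo ?kT // gtn_eqF // (leq_trans k1 kT).
  rewrite subr0 mulr_ge0 // subr_ge0 (le_trans (phiT_le (leq_trans kT kK))) //.
  by apply: h_homo; rewrite // kT.
have split_eq : \sum_(1 <= k < K.+1) (h k - psi) * (P k - Pstar Pbar T k) =
    (\sum_(1 <= k < K.+1) h k * P k - psi * \sum_(1 <= k < K.+1) P k)
    - (\sum_(1 <= k < K.+1) h k * Pstar Pbar T k - psi * \sum_(1 <= k < K.+1) Pstar Pbar T k).
  by rewrite !mulr_sumr -!sumrB; apply: eq_bigr => k _; ring.
have Q_eq : \sum_(1 <= k < K.+1) h k * Pstar Pbar T k =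
    psi * (1 + \sum_(1 <= k < K.+1) Pstar Pbar T k) - 1.
  by rewrite phi_threshold_Pstar addrAC subrr add0r.
rewrite -subr_ge0 (_ : _ - _ = \sum_(1 <= k < K.+1) (h k - psi) * (P k - Pstar Pbar T k)) //.
by rewrite split_eq Q_eq; ring.
Qed.

Lemma fobj_le_Pstar P : feasible K Pbar P -> fobj K h P <= fobj K h (Pstar Pbar T).
Proof.
have sum_ge0 (F : nat -> R) :
    (forall k, (1 <= k <= K)%N -> 0 <= F k) -> 0 <= \sum_(1 <= k < K.+1) F k.
  by move=> F_ge0; rewrite big_nat_cond sumr_ge0 // => k /andP[k1K _]; apply: F_ge0.
have sums_gt0 Q : feasible K Pbar Q ->
    0 < 1 + \sum_(1 <= k < K.+1) Q k /\ 0 < 1 + \sum_(1 <= k < K.+1) h k * Q k.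
  move=> feasQ; split; apply: (lt_le_trans ltr01); rewrite lerDl;
    apply: sum_ge0 => k k1K; have /andP[Q_ge0 _] := feasQ k k1K => //.
  by rewrite mulr_ge0 // h_ge0.
move=> feasP; rewrite /fobj -!mulrBr ler_wpM2l ?invr_ge0 ?ler0n //.
have [N_gt0 D_gt0] := sums_gt0 _ feasP.
have [Ns_gt0 Ds_gt0] := sums_gt0 _ Pstar_feasible.
apply: log2_ratio_le => //.
rewrite -phi_threshold_Pstar [X in X <= _]mulrC -mulrA mulrCA.
by apply: ler_wpM2l; [exact: ltW | exact: phi_threshold_le].
Qed.

End ThresholdAllocation.

Theorem theorem3 (R : realType) (K : nat) (Pbar h : nat -> R) :
  (1 <= K)%N ->
  (forall k, (1 <= k <= K)%N -> 0 < Pbar k) ->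
  0 < h 1%N ->
  (forall k, (1 <= k < K)%N -> h k < h k.+1) ->
  exists T : nat,
    [/\ threshold_index K h Pbar T,
        (forall T' : nat, threshold_index K h Pbar T' -> T' = T),
        feasible K Pbar (Pstar Pbar T),
        (forall P : nat -> R, feasible K Pbar P -> fobj K h P <= fobj K h (Pstar Pbar T)) &
        (forall P : nat -> R, feasible K Pbar P ->
           Num.max (fobj K h P) 0 <= Num.max (fobj K h (Pstar Pbar T)) 0)].
Proof.
move=> _ Pbar_gt0 h1_gt0 h_incr.
have [T thT] : exists T, threshold_index K h Pbar T by exact: threshold_index_exists.
have opt P : feasible K Pbar P -> fobj K h P <= fobj K h (Pstar Pbar T).
  exact: fobj_le_Pstar.
exists T; split.
- exact: thT.
- by move=> T'; apply: threshold_index_unique.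
- exact: Pstar_feasible.
- exact: opt.
- by move=> P feasP; rewrite le_max2 ?opt.
Qed.
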